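(* Let $f_1,f_2,\ldots$ be a sequence of complex polynomials converging uniformly on every compact subset of $\mathbb{C}$ to a polynomial $f\in\mathbb{C}[X]$ which has no double roots. Then there exist $m_0$ and $\rho^{(0)}\in\mathbb{C}$ such that $\rho^{(0)}$ satisfies the converging initial condition for $f_m$ for every $m>m_0$.
   Context: A complex number $\zeta$ satisfies the converging initial condition for a polynomial $g$ if: (1) there is an open convex set $D\subseteq\mathbb{C}$ with $\zeta\in D$ and a real $L>0$ such that $|g'(z_1)-g'(z_2)|\le L|z_1-z_2|$ for all $z_1,z_2\in D$; (2) $g'(\zeta)\ne0$ and there are reals $a,b$ with $|g'(\zeta)^{-1}|\le a$, $|g'(\zeta)^{-1}g(\zeta)|\le b$ and $h=abL\le\frac12$; (3) the closed disc $\overline U=\{z\in\mathbb{C}:|z-\zeta|\le t^*\}$ with $t^*=(1-\sqrt{1-2h})/(aL)$ is contained in $D$. *)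

From HB Require Import structures.
From mathcomp Require Import all_boot all_order all_algebra.
From mathcomp Require Import all_classical all_reals all_analysis.
From mathcomp Require Import complex.
Set Implicit Arguments. Unset Strict Implicit. Unset Printing Implicit Defensive.
Import Order.TTheory GRing.Theory Num.Theory.
Import numFieldNormedType.Exports.
Import ComplexField.
Local Open Scope classical_set_scope.
Local Open Scope complex_scope.
Local Open Scope ring_scope.

Definition openC (R : realType) (D : set R[i]) : Prop :=
  @open ((R[i] : numFieldType) : topologicalType) D.

Definition compactC (R : realType) (K : set R[i]) : Prop :=
  @compact ((R[i] : numFieldType) : topologicalType) K.

Definition convexC (R : realType) (D : set R[i]) : Prop :=
  forall z1 z2 : R[i], D z1 -> D z2 ->
  forall t : R, 0 <= t <= 1 -> D (t%:C * z1 + (1 - t)%:C * z2).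

Definition converging_initial_condition (R : realType) (g : {poly R[i]})
    (zeta : R[i]) : Prop :=
  exists (D : set R[i]) (L : R),
    [/\ openC D, convexC D, D zeta, 0 < L &
      (forall z1 z2 : R[i], D z1 -> D z2 ->
         `|g^`().[z1] - g^`().[z2]| <= L%:C * `|z1 - z2|)] /\
      g^`().[zeta] != 0 /\
      exists a b : R,
        [/\ `|(g^`().[zeta])^-1| <= a%:C,
            `|(g^`().[zeta])^-1 * g.[zeta]| <= b%:C,
            a * b * L <= 1 / 2 &
            [set z : R[i] | `|z - zeta|
                 <= ((1 - Num.sqrt (1 - 2 * (a * b * L))) / (a * L))%:C]
              `<=` D].

Definition unif_cvg_compacts (R : realType) (f_ : nat -> {poly R[i]})
    (f : {poly R[i]}) : Prop :=
  forall K : set R[i], compactC K ->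
  forall e : R, 0 < e ->
  exists N : nat, forall m : nat, (N <= m)%N ->
  forall z : R[i], K z -> `|(f_ m).[z] - f.[z]| < e%:C.

From Pilot Require Import Defs.
From HB Require Import structures.
From mathcomp Require Import all_boot all_order all_algebra.
From mathcomp Require Import all_classical all_reals all_analysis.
From mathcomp Require Import complex.
From mathcomp Require Import ring lra zify.
From mathcomp Require Import cyclic separable cyclotomic.
Set Implicit Arguments. Unset Strict Implicit. Unset Printing Implicit Defensive.
Import Order.TTheory GRing.Theory Num.Theory.
Import numFieldNormedType.Exports.
Import ComplexField.
Local Open Scope classical_set_scope.
Local Open Scope complex_scope.
Local Open Scope ring_scope.

(** Let z0 be a root of f, so that f'(z0) <> 0.  Averaging a polynomial over
   the points z0 + 4 w^k, w a primitive root of unity of order exceeding its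
   degree, isolates each of its Taylor coefficients at z0 (a discrete Cauchy
   formula).  Hence, once |f_m - f| <= e on the disc of radius 4 about z0,
   every Taylor coefficient q_j of f_m - f at z0 satisfies |q_j| 4^j <= e,
   however large the degree of f_m.  This makes |f_m(z0)| and
   |f_m'(z0) - f'(z0)| at most e, and the derivative of f_m - f
   e-Lipschitz on the unit disc about z0.  Taking for D the open unit disc,
   for L one more than a Lipschitz constant of f' there, a = 2/|f'(z0)| and
   b = a e, one gets h = a b L <= 1/2 and t* <= 2b < 1 as soon as e is small,
   uniformly in m. *)

Lemma sum_expr_unity_root_eq0 (F : idomainType) (x : F) (N : nat) :
  x ^+ N = 1 -> x != 1 -> \sum_(k < N) x ^+ k = 0.
Proof.
move=> xN1 x_neq1; apply/eqP; have := subrX1 x N.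
by rewrite xN1 subrr => /esym/eqP; rewrite mulf_eq0 subr_eq0 (negbTE x_neq1).
Qed.

Lemma sum_horner_prim_root (F : fieldType) (q : {poly F}) (N : nat) (w r : F)
    (j : nat) :
  N.-primitive_root w -> (size q <= N)%N -> (j < N)%N ->
  \sum_(k < N) q.[r * w ^+ k] / (w ^+ k) ^+ j = N%:R * (q`_j * r ^+ j).
Proof.
move=> w_prim size_q ltjN.
have w_neq0 k : w ^+ k != 0.
  apply: expf_neq0; apply: contra_eq_neq (prim_expr_order w_prim) => ->.
  by rewrite expr0n gtn_eqF ?(leq_ltn_trans _ ltjN) // eq_sym oner_eq0.
transitivity (\sum_(i < N) q`_i * r ^+ i * \sum_(k < N) (w ^+ i / w ^+ j) ^+ k).
  under eq_bigr => k _ do rewrite (horner_coef_wide _ size_q) mulr_suml.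
  rewrite exchange_big /=; apply: eq_bigr => i _; rewrite mulr_sumr.
  by apply: eq_bigr => k _; rewrite !exprMn exprVn !(exprAC _ k) !mulrA.
rewrite (bigD1 (Ordinal ltjN)) //= [X in _ + X]big1 ?addr0 => [|i /eqP neq_ij].
  rewrite divff // (eq_bigr (fun=> 1)) => [|k _]; last exact: expr1n.
  by rewrite sumr_const card_ord mulrC.
apply/eqP; rewrite mulf_eq0 sum_expr_unity_root_eq0 ?eqxx ?orbT //.
  rewrite exprMn exprVn -!exprM !(mulnC _ N) !exprM (prim_expr_order w_prim).
  by rewrite !expr1n invr1 mulr1.
rewrite -(can_eq (mulfK (w_neq0 j))) divfK // mul1r.
rewrite (eq_prim_root_expr w_prim) !modn_small //.
by apply/eqP => eq_ij; apply: neq_ij; apply: val_inj.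
Qed.

Lemma prim_root_exists (F : closedFieldType) (n : nat) :
  n%:R != 0 :> F -> exists w : F, n.-primitive_root w.
Proof.
move=> n_neq0; have n_gt0 : (0 < n)%N by case: n n_neq0; rewrite ?eqxx.
have [r Dp] := closed_field_poly_normal ('X^n - 1 : {poly F}).
rewrite (monicP (monicXnsubC 1 n_gt0)) scale1r in Dp.
have rn1 : all n.-unity_root r by apply/allP => z; rewrite -root_prod_XsubC -Dp.
have sz_r : (n < (size r).+1)%N by rewrite -(size_prod_XsubC r id) -Dp size_XnsubC.
have [|w] := hasP (has_prim_root n_gt0 rn1 _ sz_r); last by exists w.
by rewrite -separable_prod_XsubC -Dp separable_Xn_sub_1.
Qed.

Lemma norm_prim_root (C : numDomainType) (n : nat) (w : C) :
  (0 < n)%N -> n.-primitive_root w -> `|w| = 1.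
Proof.
move=> n_gt0 w_prim; apply/eqP; rewrite -(pexpr_eq1 n_gt0) ?normr_ge0 //.
by rewrite -normrX (prim_expr_order w_prim) normr1.
Qed.

Lemma cauchy_estimate (C : numClosedFieldType) (q : {poly C}) (r M : C) :
  0 < r -> (forall u, `|u| = r -> `|q.[u]| <= M) ->
  forall j, `|q`_j| * r ^+ j <= M.
Proof.
move=> r_gt0 qM j; set N := (size q).+1.
have M_ge0 : 0 <= M by apply: le_trans (qM r (gtr0_norm r_gt0)).
have [ltjN|leNj] := ltnP j N; last first.
  by rewrite nth_default ?normr0 ?mul0r // ltnW.
have [w w_prim] := @prim_root_exists C N (lt0r_neq0 (ltr0Sn _ _)).
have w_norm := norm_prim_root (ltn0Sn (size q)) w_prim.
have N_gt0 : 0 < N%:R :> C by rewrite ltr0n.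
rewrite -(ler_pM2l N_gt0) -{1}(normr_nat C N) -{1}(gtr0_norm r_gt0).
rewrite -normrX -!normrM -(sum_horner_prim_root r w_prim (leqnSn _) ltjN).
apply: le_trans (ler_norm_sum _ _ _) _.
rewrite mulr_natl -[X in _ *+ X]card_ord -sumr_const; apply: ler_sum => k _.
rewrite normrM normfV !normrX w_norm !expr1n invr1 mulr1 qM //.
by rewrite normrM normrX w_norm expr1n mulr1 gtr0_norm.
Qed.

Lemma norm_exprB_le (F : numDomainType) (w1 w2 : F) (n : nat) :
  `|w1| <= 1 -> `|w2| <= 1 -> `|w1 ^+ n - w2 ^+ n| <= n%:R * `|w1 - w2|.
Proof.
move=> w1_le1 w2_le1; elim: n => [|n IHn].
  by rewrite !expr0 subrr normr0 mul0r.
have -> : w1 ^+ n.+1 - w2 ^+ n.+1 = w1 * (w1 ^+ n - w2 ^+ n) + (w1 - w2) * w2 ^+ n.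
  by rewrite !exprS; ring.
rewrite -natr1 (mulrDl n%:R) mul1r; apply: le_trans (ler_normD _ _) (lerD _ _).
  by rewrite normrM; apply: le_trans IHn; rewrite ler_piMl.
by rewrite normrM normrX ler_piMr ?exprn_ile1.
Qed.

Lemma sum_inv_exp2 (F : numFieldType) (n : nat) :
  \sum_(i < n) (2 ^+ i.+1)^-1 = 1 - (2 ^+ n)^-1 :> F.
Proof.
elim: n => [|n IHn]; first by rewrite big_ord0 expr0 invr1 subrr.
have exp2_neq0 : 2 ^+ n != 0 :> F by rewrite expf_neq0 ?pnatr_eq0.
by rewrite big_ord_recr /= IHn exprS; field.
Qed.

Lemma mul_succ_le_exp2 (i : nat) : (i * i.+1 <= 2 ^ i.+1)%N.
Proof.
by elim: i => // i IHi; have := ltn_expl i (ltnSn 1); rewrite !expnS in IHi *; nia.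
Qed.

Lemma deriv_lipschitz_of_coef_bound (F : numFieldType) (q : {poly F}) (M : F) :
  (forall j, `|q`_j| * 4 ^+ j <= M) ->
  forall w1 w2, `|w1| <= 1 -> `|w2| <= 1 ->
  `|q^`().[w1] - q^`().[w2]| <= M * `|w1 - w2|.
Proof.
move=> qM w1 w2 w1_le1 w2_le1.
have exp2_gt0 k : 0 < 2 ^+ k :> F by rewrite exprn_gt0.
rewrite !horner_coef -sumrB; apply: le_trans (ler_norm_sum _ _ _) _.
(* Since [i (i + 1) <= 2^(i + 1)], the bound on [4^(i + 1) |q_(i + 1)|] gives
   [i |q'_i| <= M / 2^(i + 1)], which is summable. *)
apply: le_trans (_ : \sum_(i < size q^`()) M / 2 ^+ i.+1 * `|w1 - w2| <= _).
  apply: ler_sum => i _; rewrite -mulrBr normrM.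
  apply: le_trans (ler_wpM2l (normr_ge0 _) (norm_exprB_le i w1_le1 w2_le1)) _.
  rewrite mulrA ler_wpM2r // ler_pdivlMr // coef_deriv normrMn.
  apply: le_trans (qM i.+1); rewrite -[_ *+ i.+1]mulr_natr -!mulrA ler_wpM2l //.
  rewrite mulrA -natrM.
  have -> : 4 ^+ i.+1 = 2 ^+ i.+1 * 2 ^+ i.+1 :> F by rewrite -exprMn -natrM.
  by rewrite ler_pM2r // -natrX ler_nat mulnC mul_succ_le_exp2.
rewrite -mulr_suml -mulr_sumr sum_inv_exp2 ler_wpM2r // ler_piMr //.
by apply: le_trans (qM 0%N); rewrite mulr_ge0 ?exprn_ge0.
Qed.

Definition shiftp (F : comNzRingType) (P : {poly F}) (c : F) : {poly F} :=
  P \Po ('X + c%:P).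

Lemma horner_shiftp (F : comNzRingType) (P : {poly F}) (c u : F) :
  (shiftp P c).[u] = P.[u + c].
Proof. by rewrite horner_comp !hornerE. Qed.

Lemma horner_deriv_shiftp (F : comNzRingType) (P : {poly F}) (c u : F) :
  (shiftp P c)^`().[u] = P^`().[u + c].
Proof.
by rewrite deriv_comp derivD derivX derivC addr0 mulr1 horner_comp !hornerE.
Qed.

Lemma deriv_lipschitz_disc (F : numFieldType) (P : {poly F}) (c M : F) :
  (forall j, `|(shiftp P c)`_j| * 4 ^+ j <= M) ->
  forall z1 z2, `|z1 - c| <= 1 -> `|z2 - c| <= 1 ->
  `|P^`().[z1] - P^`().[z2]| <= M * `|z1 - z2|.
Proof.
move=> PM z1 z2 z1c z2c.
have := deriv_lipschitz_of_coef_bound PM z1c z2c.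
by rewrite !horner_deriv_shiftp !subrK opprB addrA subrK.
Qed.

Lemma coef_norm_bounded (F : numDomainType) (q : {poly F}) (r : F) :
  0 <= r -> exists2 M, 0 <= M & forall j, `|q`_j| * r ^+ j <= M.
Proof.
move=> r_ge0; have term_ge0 j : 0 <= `|q`_j| * r ^+ j by rewrite mulr_ge0 ?exprn_ge0.
exists (\sum_(j < size q) `|q`_j| * r ^+ j) => [|j]; first exact: sumr_ge0.
have [ltjq|leqj] := ltnP j (size q); last first.
  by rewrite nth_default // normr0 mul0r; apply: sumr_ge0.
by rewrite (bigD1 (Ordinal ltjq)) //= lerDl sumr_ge0.
Qed.

Lemma kantorovich_radius_le (F : rcfType) (a b L : F) :
  0 < a -> 0 < L -> 0 <= b -> a * b * L <= 1 / 2 ->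
  (1 - Num.sqrt (1 - 2 * (a * b * L))) / (a * L) <= 2 * b.
Proof.
move=> a_gt0 L_gt0 b_ge0 h_le.
have h_ge0 : 0 <= a * b * L by rewrite !mulr_ge0 // ltW.
set x := 1 - 2 * (a * b * L).
have x_ge0 : 0 <= x by rewrite /x; lra.
have x_le_sqrt : x <= Num.sqrt x.
  rewrite -{1}(sqr_sqrtr x_ge0) expr2 ler_piMr ?sqrtr_ge0 // -sqrtr1 ler_sqrt //.
  by rewrite /x; lra.
by rewrite ler_pdivrMr ?mulr_gt0 //; rewrite /x in x_le_sqrt *; lra.
Qed.

Section ComplexPlane.
Variable R : realType.

Lemma normc_real (x : R) : `|x%:C| = `|x|%:C.
Proof. by rewrite normc_def /= expr0n addr0 sqrtr_sqr. Qed.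

Lemma ge0_complex_real (x : R[i]) : 0 <= x -> exists2 y : R, 0 <= y & x = y%:C.
Proof.
move=> x_ge0; have /complex_realP [y x_eq] := ger0_real x_ge0.
by exists y; rewrite // -ler0c -x_eq.
Qed.

Lemma normc_le (a b : R) : `|a +i* b| <= (`|a| + `|b|)%:C.
Proof.
rewrite [a +i* b]complexE /=; apply: le_trans (ler_normD _ _) _.
by rewrite normrM normCi mul1r !normc_real -rmorphD.
Qed.

Definition square (z0 : R[i]) (r : R) : set R[i] :=
  [set z0 + (p.1 +i* p.2) | p in `[- r, r] `*` `[- r, r]].

Lemma square_compact (z0 : R[i]) (r : R) : compactC (square z0 r).
Proof.
apply: continuous_compact; last by apply: compact_setX; apply: segment_compact.
apply: continuous_subspaceT => p; apply/cvgrPdist_lt => e' e'_gt0.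
have [e _ e'E] := ge0_complex_real (ltW e'_gt0); subst e'.
move: e'_gt0; rewrite ltcR => e_gt0.
exists (ball p.1 (e / 2), ball p.2 (e / 2)).
  by split; apply: nbhsx_ballx; rewrite divr_gt0.
case=> x y [/=]; rewrite -!ball_normE /= => px py.
rewrite opprD addrACA subrr add0r; apply: le_lt_trans (normc_le _ _) _.
by rewrite ltcR (splitr e) ltrD.
Qed.

Lemma mem_square (z0 u : R[i]) (r : R) : `|u| <= r%:C -> square z0 r (z0 + u).
Proof.
case: u => a b; rewrite normc_def lecR /= => ab_le_r.
exists (a, b) => //; split; rewrite /= in_itv /= -ler_norml; apply: le_trans ab_le_r.
  by rewrite -sqrtr_sqr ler_sqrt ?lerDl ?sqr_ge0 // addr_ge0 ?sqr_ge0.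
by rewrite -sqrtr_sqr ler_sqrt ?lerDr ?sqr_ge0 // addr_ge0 ?sqr_ge0.
Qed.

Definition unit_disc (z0 : R[i]) : set R[i] := [set z | `|z - z0| < 1].

Lemma unit_disc_open (z0 : R[i]) : Defs.openC (unit_disc z0).
Proof.
have <- : ball (z0 : (R[i] : numFieldType)) 1 = unit_disc z0.
  by rewrite -ball_normE; apply/seteqP; split => z /=; rewrite distrC.
exact: ball_open.
Qed.

Lemma unit_disc_convex (z0 : R[i]) : convexC (unit_disc z0).
Proof.
move=> z1 z2 z1_near z2_near t /andP[t_ge0 t_le1]; rewrite /unit_disc /=.
have -> : t%:C * z1 + (1 - t)%:C * z2 - z0 =
          t%:C * (z1 - z0) + (1 - t)%:C * (z2 - z0) by rewrite rmorphB /=; ring.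
apply: le_lt_trans (ler_normD _ _) _.
have t'_ge0 : 0 <= 1 - t by rewrite subr_ge0.
rewrite !normrM !normc_real (ger0_norm t_ge0) (ger0_norm t'_ge0).
have [->|t_neq0] := eqVneq t 0.
  by rewrite rmorph0 mul0r add0r subr0 rmorph1 mul1r.
apply: (@lt_le_trans _ _ (t%:C * 1 + (1 - t)%:C * 1)).
  apply: ltr_leD; first by rewrite ltr_pM2l // ltcR lt0r t_neq0.
  by apply: ler_wpM2l; rewrite ?ler0c // ltW.
by rewrite !mulr1 -rmorphD addrC subrK rmorph1.
Qed.

Lemma converging_initial_condition_disc (g : {poly R[i]}) (zeta : R[i])
    (c e L : R) :
  0 < c -> 0 < L -> c%:C <= `|g^`().[zeta]| -> `|g.[zeta]| <= e%:C ->
  2 * e * L <= c ^+ 2 -> 2 * e < c ->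
  (forall z1 z2, unit_disc zeta z1 -> unit_disc zeta z2 ->
     `|g^`().[z1] - g^`().[z2]| <= L%:C * `|z1 - z2|) ->
  converging_initial_condition g zeta.
Proof.
move=> c_gt0 L_gt0 c_le e_ge small_eL small_e g'_lip.
have e_ge0 : 0 <= e by rewrite -ler0c; apply: le_trans e_ge.
have g'_gt0 : 0 < `|g^`().[zeta]| by apply: lt_le_trans c_le; rewrite ltcR.
have normV_le : `|(g^`().[zeta])^-1| <= c^-1%:C.
  by rewrite normfV fmorphV lef_pV2 // posrE ltcR.
exists (unit_disc zeta), L; split.
  split; rewrite /unit_disc /= ?subrr ?normr0 //.
    exact: unit_disc_open.
  exact: unit_disc_convex.
split; first by rewrite -normr_gt0.
have h_le : c^-1 * (c^-1 * e) * L <= 1 / 2.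
  have -> : c^-1 * (c^-1 * e) * L = 2 * e * L / (2 * c ^+ 2).
    by field; rewrite gt_eqF.
  by rewrite ler_pdivrMr ?mulr_gt0 ?exprn_gt0 //; lra.
exists c^-1, (c^-1 * e); split => //.
  by rewrite normrM rmorphM ler_pM ?normr_ge0.
move=> z /= z_near; apply: le_lt_trans z_near _; rewrite ltcR.
have cV_gt0 : 0 < c^-1 by rewrite invr_gt0.
have b_ge0 : 0 <= c^-1 * e by rewrite mulr_ge0 // ltW.
apply: le_lt_trans (kantorovich_radius_le cV_gt0 L_gt0 b_ge0 h_le) _.
by rewrite mulrCA mulrC ltr_pdivrMr // mul1r.
Qed.

Lemma small_poly_estimates (P : {poly R[i]}) (z0 : R[i]) (e : R) :
  (forall u, `|u| <= 4 -> `|P.[z0 + u]| <= e%:C) ->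
  [/\ `|P.[z0]| <= e%:C, `|P^`().[z0]| <= e%:C &
      forall z1 z2, `|z1 - z0| <= 1 -> `|z2 - z0| <= 1 ->
        `|P^`().[z1] - P^`().[z2]| <= e%:C * `|z1 - z2|].
Proof.
move=> P_small.
have P_coef j : `|(shiftp P z0)`_j| * 4 ^+ j <= e%:C.
  by apply: cauchy_estimate => // u u_eq4; rewrite horner_shiftp addrC P_small ?u_eq4.
split.
- by rewrite -[z0]addr0 P_small ?normr0.
- rewrite -[z0]add0r -horner_deriv_shiftp horner_coef0 coef_deriv mulr1n.
  by apply: le_trans (P_coef 1%N); rewrite expr1 ler_peMr // ler1n.
- exact: deriv_lipschitz_disc.
Qed.

Lemma converging_initial_condition_stable (f : {poly R[i]}) (z0 : R[i]) :
  root f z0 -> f^`().[z0] != 0 ->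
  exists2 e : R, 0 < e & forall g : {poly R[i]},
    (forall u, `|u| <= 4 -> `|(g - f).[z0 + u]| <= e%:C) ->
    converging_initial_condition g z0.
Proof.
move=> f_z0 f'_z0_neq0.
have [c2 _ f'_z0] := ge0_complex_real (normr_ge0 f^`().[z0]).
pose c := c2 / 2; have c_gt0 : 0 < c.
  by rewrite divr_gt0 // -ltcR -f'_z0 normr_gt0.
have [_ /ge0_complex_real[Lf Lf_ge0 ->] f_coef] :=
  coef_norm_bounded (shiftp f z0) (ler0n _ 4).
have f'_lip := deriv_lipschitz_disc f_coef.
pose L := Lf + 1; have L_gt0 : 0 < L by rewrite ltr_pwDr.
have cL_gt0 : 0 < c ^+ 2 / (2 * L) by rewrite divr_gt0 ?exprn_gt0 // mulr_gt0.
have c4_gt0 : 0 < c / 4 by rewrite divr_gt0.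
exists (Num.min 1 (Num.min (c ^+ 2 / (2 * L)) (c / 4))) => [|g].
  by rewrite !lt_min ltr01 cL_gt0 c4_gt0.
set e := Num.min _ _ => /small_poly_estimates[P_z0 P'_z0 P'_lip].
have [e_le1 e_le_cL e_le_c] : [/\ e <= 1, e <= c ^+ 2 / (2 * L) & e <= c / 4].
  by rewrite !ge_min !lexx !orbT.
have gE : g = f + (g - f) by rewrite addrC subrK.
apply: (@converging_initial_condition_disc _ _ c e L) => //.
- rewrite gE derivD hornerD; apply: le_trans; last exact: lerB_normD.
  rewrite f'_z0 lerBrDl; apply: le_trans (lerD P'_z0 (lexx _)) _.
  by rewrite -rmorphD lecR; rewrite /c in c_gt0 e_le_c *; lra.
- by rewrite gE hornerD (rootP f_z0) add0r.
- by move: e_le_cL; rewrite ler_pdivlMr ?mulr_gt0 //; lra.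
- lra.
- move=> z1 z2 /ltW z1_near /ltW z2_near; rewrite gE derivD !hornerD.
  rewrite opprD addrACA; apply: le_trans (ler_normD _ _) _.
  apply: le_trans (lerD (f'_lip _ _ z1_near z2_near) (P'_lip _ _ z1_near z2_near)) _.
  by rewrite -mulrDl ler_wpM2r // -rmorphD lecR lerD2l.
Qed.

End ComplexPlane.

Theorem lemma7 (R : realType) (f_ : nat -> {poly R[i]}) (f : {poly R[i]}) :
  unif_cvg_compacts f_ f ->
  (1 < size f)%N ->
  (forall z : R[i], root f z -> f^`().[z] != 0) ->
  exists (m0 : nat) (rho0 : R[i]),
    forall m : nat, (m0 < m)%N -> converging_initial_condition (f_ m) rho0.
Proof.
move=> f_cvg size_f simple_roots.
have [z0 f_z0] : exists z0, root f z0.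
  by apply/closed_rootP; rewrite neq_ltn size_f orbT.
have [e e_gt0 stable] :=
  converging_initial_condition_stable f_z0 (simple_roots _ f_z0).
have [N N_cvg] := f_cvg _ (@square_compact _ z0 4) e e_gt0.
exists N, z0 => m ltNm; apply: stable => u u_le4.
rewrite !hornerE ltW // N_cvg ?(ltnW ltNm) //.
by apply: mem_square; rewrite rmorph_nat.
Qed.
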